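(* For every $i\in\mathbb{N}$, the family $\{\mathrm{bit}_i:\mathbb{Z}_{2^k}\to\{-1,1\}\}_{k>i}$ is concentrated.
   Context: $\mathbb{Z}_N=\{0,\dots,N-1\}$ with addition mod $N$. $\mathrm{bit}_i:\mathbb{Z}_{2^k}\to\{-1,1\}$ is $\mathrm{bit}_i(x)=(-1)^{x_i}$ where $x=\sum_{j=0}^{k-1}x_j2^j$, $x_j\in\{0,1\}$. For $f:\mathbb{Z}_N\to\mathbb{C}$: $\langle f,g\rangle=\frac1N\sum_x f(x)\overline{g(x)}$, $\|f\|_2^2=\langle f,f\rangle$, $\chi_\alpha(x)=\exp(2\pi i\alpha x/N)$, $\widehat f(\alpha)=\langle f,\chi_\alpha\rangle$, and $f|_\Gamma=\sum_{\alpha\in\Gamma}\widehat f(\alpha)\chi_\alpha$ for $\Gamma\subseteq\mathbb{Z}_N$. A family of functions $f_k:\mathbb{Z}_{N_k}\to\mathbb{C}$ is concentrated if there is a bivariate polynomial $P\in\mathbb{R}[x,y]$ such that for every index $k$ and every $\epsilon>0$ there is $\Gamma_k\subseteq\mathbb{Z}_{N_k}$ with $|\Gamma_k|\le P(\log(N_k),1/\epsilon)$ and $\|f_k-f_k|_{\Gamma_k}\|_2^2<\epsilon$. *)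

From Stdlib Require Import Reals List Arith.
From Coquelicot Require Import Coquelicot.
Open Scope R_scope.

(* Functions Z_N -> C are represented as nat -> C; only arguments 0..N-1 matter. *)

Definition sumZ (N : nat) (F : nat -> C) : C :=
  fold_right Cplus (RtoC 0) (map F (seq 0 N)).

Definition inner (N : nat) (f g : nat -> C) : C :=
  Cmult (RtoC (/ INR N)) (sumZ N (fun x => Cmult (f x) (Cconj (g x)))).

Definition norm2sq (N : nat) (f : nat -> C) : R := Re (inner N f f).

Definition chi (N alpha : nat) (x : nat) : C :=
  let t := 2 * PI * INR alpha * INR x / INR N in (cos t, sin t).

Definition fhat (N : nat) (f : nat -> C) (alpha : nat) : C := inner N f (chi N alpha).

(* A subset Gamma of Z_N is a boolean predicate on nat, restricted to 0..N-1 *)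
Definition card_sub (N : nat) (Gamma : nat -> bool) : nat :=
  length (filter Gamma (seq 0 N)).

Definition restrict (N : nat) (f : nat -> C) (Gamma : nat -> bool) : nat -> C :=
  fun x => sumZ N (fun alpha =>
    if Gamma alpha then Cmult (fhat N f alpha) (chi N alpha x) else RtoC 0).

(* bivariate real polynomials: finite lists of monomials (c, (a, b)) = c x^a y^b *)
Definition poly2 := list (R * (nat * nat)).
Definition eval2 (P : poly2) (x y : R) : R :=
  fold_right (fun m acc => fst m * x ^ (fst (snd m)) * y ^ (snd (snd m)) + acc) 0 P.

Definition concentrated (K : Type) (N : K -> nat) (f : K -> nat -> C) : Prop :=
  exists P : poly2, forall (k : K) (eps : R), 0 < eps ->
    exists Gamma : nat -> bool,
      INR (card_sub (N k) Gamma) <= eval2 P (ln (INR (N k))) (/ eps) /\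
      norm2sq (N k) (fun x => Cminus (f k x) (restrict (N k) (f k) Gamma x)) < eps.

Definition bit (i : nat) (x : nat) : C :=
  if Nat.eqb ((x / 2 ^ i) mod 2) 0 then RtoC 1 else RtoC (-1).

(** A function on Z_N of period M, where N = M L, is a linear combination of
    the M characters chi_(j L): its Fourier transform is supported on the
    multiples of L.  Since bit_i has period 2^(i+1), taking Gamma = L Z_(2^k)
    gives bit_i|_Gamma = bit_i exactly, with |Gamma| = 2^(i+1) independent of
    k and eps; the constant polynomial 2^(i+1) therefore witnesses
    concentration. *)
From Stdlib Require Import Reals Arith Lia Lra ZArith List.
From Coquelicot Require Import Coquelicot.
Local Open Scope R_scope.
Local Open Scope C_scope.

Lemma fold_right_Cplus_init (l : list C) (a : C) :
  fold_right Cplus a l = fold_right Cplus 0 l + a.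
Proof. induction l as [|h t IH]; simpl; [|rewrite IH]; ring. Qed.

Lemma sumZ_0 F : sumZ 0 F = 0.
Proof. reflexivity. Qed.

Lemma sumZ_S n F : sumZ (S n) F = sumZ n F + F n.
Proof.
  unfold sumZ. rewrite seq_S, map_app, fold_right_app, fold_right_Cplus_init.
  simpl. ring.
Qed.

Lemma sumZ_add m n F :
  sumZ (m + n) F = sumZ m F + sumZ n (fun x => F (m + x)%nat).
Proof.
  induction n as [|n IH].
  - rewrite Nat.add_0_r, sumZ_0. ring.
  - rewrite Nat.add_succ_r, !sumZ_S, IH. ring.
Qed.

Lemma sumZ_ext n F G :
  (forall x, (x < n)%nat -> F x = G x) -> sumZ n F = sumZ n G.
Proof.
  induction n as [|n IH]; intros H; [reflexivity|].
  rewrite !sumZ_S, IH, H; auto.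
Qed.

Lemma sumZ_plus n F G : sumZ n (fun x => F x + G x) = sumZ n F + sumZ n G.
Proof.
  induction n as [|n IH]; [rewrite !sumZ_0; ring|].
  rewrite !sumZ_S, IH. ring.
Qed.

Lemma sumZ_scal n c F : sumZ n (fun x => c * F x) = c * sumZ n F.
Proof.
  induction n as [|n IH]; [rewrite !sumZ_0; ring|].
  rewrite !sumZ_S, IH. ring.
Qed.

Lemma sumZ_const n c : sumZ n (fun _ => c) = INR n * c.
Proof.
  induction n as [|n IH]; [rewrite sumZ_0; simpl; ring|].
  rewrite sumZ_S, IH, S_INR, RtoC_plus. ring.
Qed.

Lemma sumZ_zero n : sumZ n (fun _ => 0) = 0.
Proof. rewrite sumZ_const. ring. Qed.

Lemma sumZ_swap m n F :
  sumZ m (fun a => sumZ n (F a)) = sumZ n (fun b => sumZ m (fun a => F a b)).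
Proof.
  induction m as [|m IH]; [symmetry; apply sumZ_zero|].
  rewrite sumZ_S, IH, <- sumZ_plus. apply sumZ_ext. intros. rewrite sumZ_S. reflexivity.
Qed.

Lemma sumZ_mul m n F :
  sumZ (m * n) F = sumZ m (fun q => sumZ n (fun r => F (q * n + r)%nat)).
Proof.
  induction m as [|m IH]; [reflexivity|].
  rewrite Nat.mul_succ_l, sumZ_add, sumZ_S, IH. reflexivity.
Qed.

Lemma sumZ_delta n c (h : nat -> C) :
  (c < n)%nat -> sumZ n (fun r => if Nat.eqb c r then h r else 0) = h c.
Proof.
  induction n as [|n IH]; intros Hc; [lia|].
  rewrite sumZ_S. destruct (Nat.eq_dec c n) as [->|Hne].
  - rewrite Nat.eqb_refl, (sumZ_ext _ _ (fun _ => 0)), sumZ_zero; [ring|].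
    intros x Hx. destruct (Nat.eqb_spec n x); [lia|reflexivity].
  - rewrite IH by lia. destruct (Nat.eqb_spec c n); [lia|ring].
Qed.

Definition E (t : R) : C := (cos (2 * PI * t), sin (2 * PI * t)).

Lemma E_add a b : E (a + b) = E a * E b.
Proof.
  unfold E, Cmult; simpl. rewrite Rmult_plus_distr_l, cos_plus, sin_plus.
  f_equal; ring.
Qed.

Lemma E_conj a : Cconj (E a) = E (- a).
Proof.
  unfold E, Cconj; simpl. replace (2 * PI * - a)%R with (- (2 * PI * a))%R by ring.
  rewrite cos_neg, sin_neg. reflexivity.
Qed.

Lemma E_INR (n : nat) : E (INR n) = 1.
Proof.
  unfold E. replace (2 * PI * INR n)%R with (0 + 2 * INR n * PI)%R by ring.
  rewrite cos_period, sin_period, cos_0, sin_0. reflexivity.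
Qed.

Lemma E_IZR (z : Z) : E (IZR z) = 1.
Proof.
  destruct (Z_le_gt_dec 0 z) as [Hz|Hz].
  - rewrite <- (Z2Nat.id z Hz), <- INR_IZR_INZ. apply E_INR.
  - replace (IZR z) with (- INR (Z.to_nat (- z)))%R.
    + rewrite <- E_conj, E_INR. apply injective_projections; simpl; ring.
    + rewrite INR_IZR_INZ, Z2Nat.id, opp_IZR by lia. ring.
Qed.

Lemma E_geometric_sum (n : nat) (t : R) :
  sumZ n (fun j => E (INR j * t)) * (E t - 1) = E (INR n * t) - 1.
Proof.
  induction n as [|n IH].
  - rewrite sumZ_0, Rmult_0_l, <- (E_IZR 0). ring.
  - rewrite sumZ_S, Cmult_plus_distr_r, IH, S_INR, Rmult_plus_distr_r, Rmult_1_l, E_add.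
    ring.
Qed.

Lemma E_ratio_neq1 (r m : Z) : (0 < r < m)%Z -> E (IZR r / IZR m) <> 1.
Proof.
  intros Hr Heq. apply (f_equal fst) in Heq. unfold E in Heq; simpl in Heq.
  replace (2 * PI * (IZR r / IZR m))%R with (2 * (PI * (IZR r / IZR m)))%R in Heq by ring.
  rewrite cos_2a_sin in Heq.
  assert (Hrm : (0 < IZR r / IZR m < 1)%R).
  { assert (0 < IZR r)%R by (apply IZR_lt; lia).
    assert (IZR r < IZR m)%R by (apply IZR_lt; lia).
    split; [apply Rdiv_lt_0_compat; lra|].
    apply (Rdiv_lt_1 (IZR r) (IZR m)); lra. }
  assert (Hsin : (0 < sin (PI * (IZR r / IZR m)))%R).
  { pose proof PI_RGT_0. apply sin_gt_0; nra. }
  nra.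
Qed.

Lemma sumZ_E_orthogonality (m : nat) (d : Z) : (0 < m)%nat ->
  sumZ m (fun j => E (INR j * IZR d / INR m)) =
  if (d mod Z.of_nat m =? 0)%Z then RtoC (INR m) else 0.
Proof.
  intros Hm. assert (HmR : INR m <> 0%R) by (apply not_0_INR; lia).
  destruct (Z.eqb_spec (d mod Z.of_nat m) 0) as [Hd|Hd].
  - apply Z.mod_divide in Hd as [c ->]; [|lia].
    rewrite (sumZ_ext _ _ (fun _ => 1)), sumZ_const; [ring|].
    intros j _. rewrite <- (E_IZR (Z.of_nat j * c)). f_equal.
    rewrite !mult_IZR, <- !INR_IZR_INZ. field. exact HmR.
  - set (t := (IZR d / INR m)%R).
    rewrite (sumZ_ext _ _ (fun j => E (INR j * t)))
      by (intros; unfold t, Rdiv; rewrite Rmult_assoc; reflexivity).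
    assert (Hsum := E_geometric_sum m t).
    replace (INR m * t)%R with (IZR d) in Hsum by (unfold t; field; exact HmR).
    rewrite E_IZR in Hsum. replace (1 - 1) with (RtoC 0) in Hsum by ring.
    (* t is an integer plus the fraction (d mod m)/m, which lies strictly in (0,1) *)
    assert (Ht : E t - 1 <> 0).
    { pose proof (Z.mod_pos_bound d (Z.of_nat m)) as Hb.
      replace t with (IZR (d / Z.of_nat m) + IZR (d mod Z.of_nat m) / IZR (Z.of_nat m))%R.
      - rewrite E_add, E_IZR, Cmult_1_l. intros H1.
        apply (E_ratio_neq1 (d mod Z.of_nat m) (Z.of_nat m)); [lia|].
        rewrite <- (Cplus_0_l 1), <- H1. ring.
      - unfold t. rewrite INR_IZR_INZ.
        rewrite (Z_div_mod_eq_full d (Z.of_nat m)) at 3.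
        rewrite plus_IZR, mult_IZR. field. rewrite <- INR_IZR_INZ. exact HmR. }
    transitivity (sumZ m (fun j => E (INR j * t)) * (E t - 1) * / (E t - 1));
      [field; exact Ht|].
    rewrite Hsum. ring.
Qed.

Lemma sumZ_E_orthogonality_nat (m x y : nat) : (0 < m)%nat ->
  sumZ m (fun j => E (INR j * (INR x - INR y) / INR m)) =
  if Nat.eqb (x mod m) (y mod m) then RtoC (INR m) else 0.
Proof.
  intros Hm.
  replace (INR x - INR y)%R with (IZR (Z.of_nat x - Z.of_nat y))
    by (rewrite minus_IZR, <- !INR_IZR_INZ; reflexivity).
  rewrite sumZ_E_orthogonality by exact Hm.
  replace ((Z.of_nat x - Z.of_nat y) mod Z.of_nat m =? 0)%Z
    with (Nat.eqb (x mod m) (y mod m)); [reflexivity|].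
  apply Bool.eq_iff_eq_true.
  rewrite Z.eqb_eq, Nat.eqb_eq, <- Z.cong_iff_0, <- !Nat2Z.inj_mod.
  split; [intros ->; reflexivity|apply Nat2Z.inj].
Qed.

Definition periodic (m : nat) (f : nat -> C) : Prop := forall x, f (x + m)%nat = f x.

Lemma periodic_mul_add m f q r : periodic m f -> f (q * m + r)%nat = f r.
Proof.
  intros Hf. induction q as [|q IH]; [reflexivity|].
  rewrite <- IH, <- (Hf (q * m + r)%nat). f_equal. lia.
Qed.

Lemma periodic_mod m f x : periodic m f -> f x = f (x mod m).
Proof.
  intros Hf. rewrite (Nat.div_mod_eq x m) at 1.
  rewrite Nat.mul_comm. apply periodic_mul_add, Hf.
Qed.

Definition multiples (l al : nat) : bool := Nat.eqb (al mod l) 0.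

Lemma card_sub_multiples (m l : nat) : (0 < l)%nat -> card_sub (m * l) (multiples l) = m.
Proof.
  intros Hl. unfold card_sub. induction m as [|m IH]; [reflexivity|].
  rewrite Nat.mul_succ_l, seq_app, filter_app, length_app, IH.
  destruct l as [|l]; [lia|].
  rewrite <- cons_seq. simpl filter.
  unfold multiples at 1. rewrite Nat.Div0.mod_mul. simpl.
  rewrite (filter_ext_in _ (fun _ => false)), filter_false; [simpl; lia|].
  intros y Hy. apply in_seq in Hy. unfold multiples.
  replace y with ((y - m * S l) + m * S l)%nat by lia.
  rewrite Nat.Div0.mod_add, Nat.mod_small by lia.
  apply Nat.eqb_neq. lia.
Qed.

Section PeriodicFourier.

Variables (M L : nat) (f : nat -> C).
Hypotheses (HM : (0 < M)%nat) (HL : (0 < L)%nat).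

Lemma chi_multiple a x : chi (M * L) (a * L) x = E (INR a * INR x / INR M).
Proof.
  assert (INR M <> 0%R) by (apply not_0_INR; lia).
  assert (INR L <> 0%R) by (apply not_0_INR; lia).
  unfold chi, E. rewrite !mult_INR.
  replace (2 * PI * (INR a * INR L) * INR x / (INR M * INR L))%R
    with (2 * PI * (INR a * INR x / INR M))%R by (field; auto).
  reflexivity.
Qed.

Lemma restrict_multiples x :
  restrict (M * L) f (multiples L) x =
  sumZ M (fun j => fhat (M * L) f (j * L) * chi (M * L) (j * L) x).
Proof.
  unfold restrict. rewrite sumZ_mul. apply sumZ_ext. intros j _.
  rewrite (sumZ_ext L _ (fun t => if Nat.eqb 0 t
             then fhat (M * L) f (j * L + t) * chi (M * L) (j * L + t) x else 0)).
  - rewrite sumZ_delta, Nat.add_0_r by exact HL. reflexivity.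
  - intros t Ht. unfold multiples.
    rewrite Nat.add_comm, Nat.Div0.mod_add, Nat.mod_small, Nat.eqb_sym by exact Ht.
    reflexivity.
Qed.

Lemma fhat_chi_multiple j x :
  fhat (M * L) f (j * L) * chi (M * L) (j * L) x =
  RtoC (/ INR (M * L)) * sumZ (M * L) (fun y => f y * E (INR j * (INR x - INR y) / INR M)).
Proof.
  unfold fhat, inner.
  rewrite <- Cmult_assoc, (Cmult_comm (sumZ _ _)), <- sumZ_scal. f_equal.
  apply sumZ_ext. intros y _.
  rewrite !chi_multiple, E_conj.
  replace (INR j * (INR x - INR y) / INR M)%R
    with (- (INR j * INR y / INR M) + INR j * INR x / INR M)%R by (unfold Rdiv; ring).
  rewrite E_add. ring.
Qed.

Hypothesis Hf : periodic M f.

Lemma sumZ_periodic_residue x :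
  sumZ (M * L) (fun y => f y * if Nat.eqb (x mod M) (y mod M) then RtoC (INR M) else 0) =
  INR (M * L) * f x.
Proof.
  rewrite (Nat.mul_comm M L) at 1. rewrite sumZ_mul.
  rewrite (sumZ_ext L _ (fun _ => f x * INR M)).
  - rewrite sumZ_const, mult_INR, RtoC_mult. ring.
  - intros q _.
    rewrite (sumZ_ext M _ (fun r => if Nat.eqb (x mod M) r then f r * INR M else 0)).
    + rewrite sumZ_delta by (apply Nat.mod_upper_bound; lia).
      rewrite <- periodic_mod by exact Hf. reflexivity.
    + intros r Hr. rewrite periodic_mul_add by exact Hf.
      rewrite (Nat.add_comm (q * M) r), Nat.Div0.mod_add, (Nat.mod_small r M Hr).
      destruct (Nat.eqb (x mod M) r); ring.
Qed.

Theorem restrict_periodic x : restrict (M * L) f (multiples L) x = f x.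
Proof.
  assert (HN : INR (M * L) <> 0%R) by (apply not_0_INR; lia).
  rewrite restrict_multiples.
  rewrite (sumZ_ext _ _ _ (fun j _ => fhat_chi_multiple j x)), sumZ_scal, sumZ_swap.
  rewrite (sumZ_ext (M * L) _
    (fun y => f y * if Nat.eqb (x mod M) (y mod M) then RtoC (INR M) else 0)).
  - rewrite sumZ_periodic_residue, Cmult_assoc, <- RtoC_mult, Rinv_l by exact HN.
    apply Cmult_1_l.
  - intros y _. rewrite sumZ_scal, sumZ_E_orthogonality_nat by exact HM. reflexivity.
Qed.

End PeriodicFourier.

Lemma norm2sq_eq0 (N : nat) (g : nat -> C) : (forall x, g x = 0) -> norm2sq N g = 0%R.
Proof.
  intros Hg. unfold norm2sq, inner.
  rewrite (sumZ_ext _ _ (fun _ => 0)), sumZ_zero, Cmult_0_r by (intros x _; rewrite Hg; ring).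
  reflexivity.
Qed.

Lemma bit_periodic i : periodic (2 ^ S i) (bit i).
Proof.
  intros x. unfold bit.
  rewrite Nat.pow_succ_r', Nat.div_add by (apply Nat.pow_nonzero; lia).
  rewrite <- (Nat.mul_1_l 2) at 2. rewrite Nat.Div0.mod_add. reflexivity.
Qed.

Close Scope C_scope.
Close Scope R_scope.

Theorem corollary6p4 (i : nat) :
  concentrated {k : nat | (i < k)%nat} (fun k => (2 ^ proj1_sig k)%nat)
    (fun _ => bit i).
Proof.
  exists ((INR (2 ^ S i), (0%nat, 0%nat)) :: nil).
  intros [k Hk] eps Heps. simpl proj1_sig.
  set (L := (2 ^ (k - S i))%nat).
  assert (HM : (0 < 2 ^ S i)%nat) by (apply Nat.neq_0_lt_0, Nat.pow_nonzero; lia).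
  assert (HL : (0 < L)%nat) by (apply Nat.neq_0_lt_0, Nat.pow_nonzero; lia).
  replace (2 ^ k)%nat with (2 ^ S i * L)%nat
    by (unfold L; rewrite <- Nat.pow_add_r; f_equal; lia).
  exists (multiples L). split.
  - rewrite card_sub_multiples by exact HL. unfold eval2. simpl. lra.
  - assert (Hexact : forall x,
      Cminus (bit i x) (restrict (2 ^ S i * L) (bit i) (multiples L) x) = RtoC 0).
    { intros x. rewrite restrict_periodic by (exact HM || exact HL || apply bit_periodic).
      apply Cplus_opp_r. }
    rewrite (norm2sq_eq0 _ _ Hexact). exact Heps.
Qed.
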